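(* Let $\|\cdot\|$ be a $C^2$ and strictly convex norm on $\mathbb{R}^2$. Then for every $\varepsilon>0$ there exists $R>0$ such that for all points $a,b\in\mathbb{R}^2$ with $a\neq b$ and $\|b-a\|=1$, $$\sup\{\mathrm{dist}(z,L(a,b)) : z\in M(a,b)\setminus B(a,R)\}\leq\varepsilon,$$ where $\mathrm{dist}$ is the Euclidean distance and $B(a,R)$ the Euclidean open ball of center $a$ and radius $R$.
   Context: The norm is called $C^2$ and strictly convex if $x\mapsto\|x\|$ is $C^2$ on $\mathbb{R}^2\setminus\{0\}$ and the unit sphere $\partial B_{\|\cdot\|}(0,1)=\{\|x\|=1\}$ is a $C^2$ curve with strictly positive curvature (equivalently $D^2\|x\|(h,h)>0$ for $x\ne0$, $h$ not parallel to $x$). For $a,b\in\mathbb{R}^2$ the curve bisector is $M(a,b)=\{z\in\mathbb{R}^2:\|a-z\|=\|b-z\|\}$. For $x$ with $\|x\|=1$, there are exactly two points $y_1,y_2$ (with $y_2=-y_1$) on the unit sphere at which the tangent line to the unit sphere is directed by $x$; $L_x$ denotes the line through $y_1$ and $y_2$ (a line through the origin). For $x\neq0$ with $\|x\|\neq1$, $L_x:=L_{x/\|x\|}$. Finally $L(a,b):=\frac{a+b}{2}+L_{b-a}$. *)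

From Stdlib Require Import Reals.
From Coquelicot Require Import Coquelicot.
Open Scope R_scope.

Definition pt := (R * R)%type.

Definition padd (p q : pt) : pt := (fst p + fst q, snd p + snd q).
Definition psub (p q : pt) : pt := (fst p - fst q, snd p - snd q).
Definition pscal (c : R) (p : pt) : pt := (c * fst p, c * snd p).

Definition is_norm (N : pt -> R) : Prop :=
  (forall x, 0 <= N x) /\
  (forall x, N x = 0 -> x = (0, 0)) /\
  (forall c x, N (pscal c x) = Rabs c * N x) /\
  (forall x y, N (padd x y) <= N x + N y).

Definition D1 (f : pt -> R) (p : pt) : R := Derive (fun t => f (t, snd p)) (fst p).
Definition D2 (f : pt -> R) (p : pt) : R := Derive (fun t => f (fst p, t)) (snd p).

Definition C2_off0 (f : pt -> R) : Prop :=
  forall p : pt, p <> (0, 0) ->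
    (forall g, List.In g (f :: D1 f :: D2 f :: nil) ->
       ex_derive (fun t => g (t, snd p)) (fst p) /\
       ex_derive (fun t => g (fst p, t)) (snd p)) /\
    (forall g, List.In g (f :: D1 f :: D2 f :: D1 (D1 f) :: D2 (D1 f)
                      :: D1 (D2 f) :: D2 (D2 f) :: nil) ->
       continuous g p).

Definition hess_quad (f : pt -> R) (p h : pt) : R :=
  fst h * fst h * D1 (D1 f) p
  + fst h * snd h * (D2 (D1 f) p + D1 (D2 f) p)
  + snd h * snd h * D2 (D2 f) p.

Definition parallel (h x : pt) : Prop := fst h * snd x - snd h * fst x = 0.

Definition C2_strictly_convex_norm (N : pt -> R) : Prop :=
  is_norm N /\ C2_off0 N /\
  forall x h, x <> (0, 0) -> ~ parallel h x -> hess_quad N x h > 0.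

(* the tangent line to the unit sphere at y (N y = 1) is directed by x iff
   x is orthogonal to the gradient of N at y *)
Definition tangent_directed_by (N : pt -> R) (y x : pt) : Prop :=
  N y = 1 /\ D1 N y * fst x + D2 N y * snd x = 0.

(* L_x for ||x|| = 1: the line through the points y of the unit sphere whose
   tangent is directed by x (and through -y); for x <> 0 general,
   L_x := L_{x/||x||}. *)
Definition Ldir (N : pt -> R) (x : pt) : pt -> Prop :=
  fun z => exists y t, tangent_directed_by N y (pscal (/ N x) x) /\ z = pscal t y.

Definition Lab (N : pt -> R) (a b : pt) : pt -> Prop :=
  fun z => Ldir N (psub b a) (psub z (pscal (/2) (padd a b))).

Definition Mab (N : pt -> R) (a b : pt) : pt -> Prop :=
  fun z => N (psub a z) = N (psub b z).

Definition edist (p q : pt) : R :=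
  sqrt ((fst p - fst q) ^ 2 + (snd p - snd q) ^ 2).

Definition dist_set (z : pt) (S : pt -> Prop) : Rbar :=
  Glb_Rbar (fun r => exists p, S p /\ r = edist z p).

Definition eball (a : pt) (R0 : R) : pt -> Prop := fun z => edist a z < R0.

From Stdlib Require Import Reals Lra Psatz.
From Coquelicot Require Import Coquelicot.
Open Scope R_scope.

(* Put w := z - (a + b) / 2 and d := (b - a) / 2, so that z lies on M(a,b) iff
   phi(s) := ||w + s d|| takes the same value at s = 1 and s = -1.  A critical point s0 of
   phi in [-1, 1] yields the point (a + b) / 2 + w + s0 d of L(a,b), at Euclidean distance
   |s0| |d| from z.  Since the norm is 1-homogeneous, its Hessian at p is
   (h x p)^2 G(p) with G positive, continuous and homogeneous of degree -3, so
   phi''(s) = (d x w)^2 G(w + s d).  When |w| is large, G(w + s d) / G(w) is uniformly close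
   to 1, so phi is almost a parabola symmetric about 0 and s0 is close to 0. *)

(** * One-variable calculus *)

Lemma MVT_is_derive (f df : R -> R) a b :
  (forall s, Rmin a b <= s <= Rmax a b -> is_derive f s (df s)) ->
  exists c, Rmin a b <= c <= Rmax a b /\ f b - f a = df c * (b - a).
Proof.
  intros Hf. apply MVT_gen.
  - intros s Hs. apply Hf. lra.
  - intros s Hs. apply continuity_pt_filterlim.
    apply (ex_derive_continuous f). eexists. now apply Hf.
Qed.

Lemma between_in_interval lo hi a b c :
  lo <= a <= hi -> lo <= b <= hi -> Rmin a b <= c <= Rmax a b ->
  lo <= c <= hi /\ 0 <= (c - a) * (b - a).
Proof. unfold Rmin, Rmax; destruct (Rle_dec a b); intros; split; nra. Qed.

Lemma convex_min_at_critical (g dg ddg : R -> R) lo hi s0 x :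
  (forall s, lo <= s <= hi -> is_derive g s (dg s)) ->
  (forall s, lo <= s <= hi -> is_derive dg s (ddg s)) ->
  (forall s, lo <= s <= hi -> 0 <= ddg s) ->
  lo <= s0 <= hi -> lo <= x <= hi -> dg s0 = 0 -> g s0 <= g x.
Proof.
  intros Hg Hdg Hpos Hs0 Hx Hcrit.
  destruct (MVT_is_derive g dg s0 x) as [c [Hc Eg]].
  { intros s Hs. apply Hg, (between_in_interval lo hi s0 x s); auto. }
  destruct (between_in_interval lo hi s0 x c Hs0 Hx Hc) as [Hc_in Hc_sign].
  destruct (MVT_is_derive dg ddg s0 c) as [c' [Hc' Edg]].
  { intros s Hs. apply Hdg, (between_in_interval lo hi s0 c s); auto. }
  destruct (between_in_interval lo hi s0 c c' Hs0 Hc_in Hc') as [Hc'_in _].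
  assert (E : g x - g s0 = ddg c' * ((c - s0) * (x - s0))) by (rewrite Eg; nra).
  assert (0 <= ddg c') by auto.
  nra.
Qed.

Lemma is_derive_Rminus (f g : R -> R) x a b :
  is_derive f x a -> is_derive g x b -> is_derive (fun t => f t - g t) x (a - b).
Proof. exact (is_derive_minus f g x a b). Qed.

Lemma quadratic_bounds_at_critical (phi dphi ddphi : R -> R) s0 kl ku :
  (forall s, -1 <= s <= 1 -> is_derive phi s (dphi s)) ->
  (forall s, -1 <= s <= 1 -> is_derive dphi s (ddphi s)) ->
  (forall s, -1 <= s <= 1 -> kl <= ddphi s <= ku) ->
  -1 <= s0 <= 1 -> dphi s0 = 0 ->
  forall x, -1 <= x <= 1 ->
    kl * (x - s0) ^ 2 / 2 <= phi x - phi s0 <= ku * (x - s0) ^ 2 / 2.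
Proof.
  intros Hphi Hdphi Hb Hs0 Hcrit x Hx. split.
  - assert (H := convex_min_at_critical
      (fun s => phi s - kl * (s - s0) ^ 2 / 2) (fun s => dphi s - kl * (s - s0))
      (fun s => ddphi s - kl) (-1) 1 s0 x).
    cbv beta in H. enough (phi s0 - kl * (s0 - s0) ^ 2 / 2 <= phi x - kl * (x - s0) ^ 2 / 2) by nra.
    apply H; auto.
    + intros s Hs. apply is_derive_Rminus; [auto|]. auto_derive; auto; field.
    + intros s Hs. apply is_derive_Rminus; [auto|]. auto_derive; auto; ring.
    + intros s Hs. specialize (Hb s Hs). lra.
    + rewrite Hcrit; ring.
  - assert (H := convex_min_at_critical
      (fun s => ku * (s - s0) ^ 2 / 2 - phi s) (fun s => ku * (s - s0) - dphi s)
      (fun s => ku - ddphi s) (-1) 1 s0 x).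
    cbv beta in H. enough (ku * (s0 - s0) ^ 2 / 2 - phi s0 <= ku * (x - s0) ^ 2 / 2 - phi x) by nra.
    apply H; auto.
    + intros s Hs. apply is_derive_Rminus; [|auto]. auto_derive; auto; field.
    + intros s Hs. apply is_derive_Rminus; [|auto]. auto_derive; auto; ring.
    + intros s Hs. specialize (Hb s Hs). lra.
    + rewrite Hcrit; ring.
Qed.

Lemma critical_point_near_center (phi dphi ddphi : R -> R) s0 k eta :
  (forall s, -1 <= s <= 1 -> is_derive phi s (dphi s)) ->
  (forall s, -1 <= s <= 1 -> is_derive dphi s (ddphi s)) ->
  (forall s, -1 <= s <= 1 -> k * (1 - eta) <= ddphi s <= k * (1 + eta)) ->
  0 < k -> 0 <= eta <= 1 ->
  -1 <= s0 <= 1 -> dphi s0 = 0 -> phi 1 = phi (-1) ->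
  Rabs s0 <= eta.
Proof.
  intros Hphi Hdphi Hb Hk Heta Hs0 Hcrit Hsym.
  assert (Q := quadratic_bounds_at_critical phi dphi ddphi s0 _ _ Hphi Hdphi Hb Hs0 Hcrit).
  destruct (Q 1 ltac:(lra)) as [L1 U1]. destruct (Q (-1) ltac:(lra)) as [L2 U2].
  rewrite Hsym in L1, U1.
  assert (C1 : (1 - eta) * (-1 - s0) ^ 2 <= (1 + eta) * (1 - s0) ^ 2).
  { apply (Rmult_le_reg_l (k / 2)); nra. }
  assert (C2 : (1 - eta) * (1 - s0) ^ 2 <= (1 + eta) * (-1 - s0) ^ 2).
  { apply (Rmult_le_reg_l (k / 2)); nra. }
  apply Rabs_le. split; nra.
Qed.

Lemma rolle_is_derive (phi dphi : R -> R) a b :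
  a < b -> (forall s, a <= s <= b -> is_derive phi s (dphi s)) -> phi a = phi b ->
  exists c, a <= c <= b /\ dphi c = 0.
Proof.
  intros Hab Hphi Heq.
  destruct (MVT_is_derive phi dphi a b) as [c [Hc E]].
  { rewrite Rmin_left, Rmax_right by lra. exact Hphi. }
  rewrite Rmin_left, Rmax_right in Hc by lra.
  exists c. split; [exact Hc|]. apply (Rmult_eq_reg_r (b - a)); lra.
Qed.

(** * Plane geometry *)

Definition supn (p : pt) : R := Rmax (Rabs (fst p)) (Rabs (snd p)).
Definition sqn (p : pt) : R := fst p ^ 2 + snd p ^ 2.
Definition cross (h p : pt) : R := fst h * snd p - snd h * fst p.
Definition rot (p : pt) : pt := (- snd p, fst p).

Lemma sqn_pos p : p <> (0, 0) -> 0 < sqn p.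
Proof.
  destruct p as [p1 p2]; unfold sqn; simpl; intros Hp.
  destruct (Req_dec p1 0) as [->|]; [destruct (Req_dec p2 0) as [->|]|]; [easy|nra|nra].
Qed.

Lemma pt_zero_or_neq0 p : p = (0, 0) \/ p <> (0, 0).
Proof.
  destruct p as [p1 p2]. destruct (Req_dec p1 0) as [->|H1].
  - destruct (Req_dec p2 0) as [->|H2]; [now left | right; intros E; injection E; auto].
  - right; intros E; injection E; auto.
Qed.

Lemma parallel_scal h p : p <> (0, 0) -> cross h p = 0 ->
  h = pscal ((fst h * fst p + snd h * snd p) / sqn p) p.
Proof.
  intros Hp Hc. assert (HS := sqn_pos p Hp).
  destruct h as [h1 h2], p as [p1 p2]; unfold cross, sqn, pscal in *; simpl in *.
  assert (E : h2 * p1 = h1 * p2) by lra.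
  f_equal; field_simplify_eq; try (intro; nra).
  - replace (p1 * h2 * p2) with (p2 * (h2 * p1)) by ring. rewrite E. ring.
  - replace (h1 * p1 * p2) with (p1 * (h1 * p2)) by ring. rewrite <- E. ring.
Qed.

Lemma abs_div_le_1 x y : y <> 0 -> Rabs x <= Rabs y -> -1 <= x / y <= 1.
Proof.
  intros Hy H. apply Rabs_le_between. rewrite Rabs_div by exact Hy.
  apply (Rmult_le_reg_r (Rabs y)); [apply Rabs_pos_lt, Hy|].
  field_simplify; [lra | apply Rabs_no_R0, Hy].
Qed.

Lemma supn_ge_abs p : Rabs (fst p) <= supn p /\ Rabs (snd p) <= supn p.
Proof. split; [apply Rmax_l | apply Rmax_r]. Qed.

Lemma supn_pos_neq0 p : 0 < supn p -> p <> (0, 0).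
Proof. intros H ->. unfold supn in H. simpl in H. rewrite Rabs_R0, Rmax_left in H; lra. Qed.

Lemma supn_pscal c p : supn (pscal c p) = Rabs c * supn p.
Proof. unfold supn, pscal; simpl. rewrite !Rabs_mult. apply RmaxRmult, Rabs_pos. Qed.

Lemma supn_pscal_le s p : -1 <= s <= 1 -> supn (pscal s p) <= supn p.
Proof.
  intros Hs. rewrite supn_pscal. assert (Rabs s <= 1) by (apply Rabs_le; lra).
  assert (0 <= supn p) by (eapply Rle_trans; [apply Rabs_pos | apply Rmax_l]).
  assert (0 <= Rabs s) by apply Rabs_pos. nra.
Qed.

Lemma supn_padd_ge w v : supn w - supn v <= supn (padd w v).
Proof.
  destruct (supn_ge_abs w), (supn_ge_abs v), (supn_ge_abs (padd w v)).
  destruct w as [w1 w2], v as [v1 v2]; unfold supn, padd in *; simpl in *.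
  assert (Rabs w1 <= Rabs (w1 + v1) + Rabs v1).
  { replace w1 with ((w1 + v1) + - v1) at 1 by ring. rewrite <- (Rabs_Ropp v1). apply Rabs_triang. }
  assert (Rabs w2 <= Rabs (w2 + v2) + Rabs v2).
  { replace w2 with ((w2 + v2) + - v2) at 1 by ring. rewrite <- (Rabs_Ropp v2). apply Rabs_triang. }
  unfold Rmax at 1; destruct Rle_dec; lra.
Qed.

Lemma supn_rot p : supn (rot p) = supn p.
Proof. unfold supn, rot; simpl. rewrite Rabs_Ropp. apply Rmax_comm. Qed.

Lemma rot_padd p q : rot (padd p q) = padd (rot p) (rot q).
Proof. unfold rot, padd; simpl; f_equal; ring. Qed.

Lemma rot_pscal c p : rot (pscal c p) = pscal c (rot p).
Proof. unfold rot, pscal; simpl; f_equal; ring. Qed.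

Lemma rot4 p : rot (rot (rot (rot p))) = p.
Proof. destruct p; unfold rot; simpl; f_equal; ring. Qed.

Lemma rot_neq0 p : p <> (0, 0) -> rot p <> (0, 0).
Proof. destruct p as [p1 p2]; unfold rot; simpl; intros Hp E; injection E; intros; apply Hp; f_equal; lra. Qed.

Definition in_sector (p : pt) : Prop := Rabs (snd p) <= fst p.

Lemma supn_in_sector p : in_sector p -> supn p = fst p.
Proof.
  unfold in_sector, supn; intros H. assert (0 <= Rabs (snd p)) by apply Rabs_pos.
  rewrite Rabs_right by lra. apply Rmax_left; lra.
Qed.

Lemma sector_cases p :
  in_sector p \/ in_sector (rot p) \/ in_sector (rot (rot p)) \/ in_sector (rot (rot (rot p))).
Proof.
  destruct p as [p1 p2]; unfold in_sector, rot; simpl.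
  rewrite !Rabs_Ropp. unfold Rabs; repeat destruct Rcase_abs; lra.
Qed.

Lemma segment_end_plus w d : padd w (pscal 1 d) = padd w d.
Proof. unfold padd, pscal; simpl; f_equal; ring. Qed.

Lemma segment_end_minus w d : padd w (pscal (-1) d) = psub w d.
Proof. unfold padd, psub, pscal; simpl; f_equal; ring. Qed.

Lemma edist_le_sum p q : edist p q <= Rabs (fst p - fst q) + Rabs (snd p - snd q).
Proof.
  unfold edist. set (x := fst p - fst q). set (y := snd p - snd q).
  assert (0 <= Rabs x) by apply Rabs_pos. assert (0 <= Rabs y) by apply Rabs_pos.
  rewrite <- (sqrt_pow2 (Rabs x + Rabs y)) by lra. apply sqrt_le_1_alt.
  rewrite <- (pow2_abs x), <- (pow2_abs y). nra.
Qed.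

Lemma edist_padd_pscal z s v : edist z (padd z (pscal s v)) <= 2 * Rabs s * supn v.
Proof.
  eapply Rle_trans; [apply edist_le_sum|]. destruct (supn_ge_abs v) as [H1 H2].
  unfold padd, pscal; simpl.
  replace (fst z - (fst z + s * fst v)) with (- (s * fst v)) by ring.
  replace (snd z - (snd z + s * snd v)) with (- (s * snd v)) by ring.
  rewrite !Rabs_Ropp, !Rabs_mult. assert (0 <= Rabs s) by apply Rabs_pos. nra.
Qed.

Lemma midpoint_far_from_ball a b z R0 : ~ eball a R0 z ->
  R0 / 2 - supn (pscal (/ 2) (psub b a)) <= supn (psub z (pscal (/ 2) (padd a b))).
Proof.
  unfold eball. intros Hz. apply Rnot_lt_le in Hz.
  assert (H := edist_le_sum a z). destruct (supn_ge_abs (psub z a)) as [H1 H2].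
  assert (Hd := supn_padd_ge (psub z a) (pscal (-1) (pscal (/ 2) (psub b a)))).
  rewrite supn_pscal, (Rabs_left (-1)) in Hd by lra.
  replace (padd (psub z a) (pscal (-1) (pscal (/ 2) (psub b a))))
    with (psub z (pscal (/ 2) (padd a b))) in Hd by (unfold padd, psub, pscal; simpl; f_equal; field).
  set (S := supn (psub z a)) in *. simpl in H1, H2. rewrite Rabs_minus_sym in H1, H2.
  lra.
Qed.

Lemma dist_set_le z (S : pt -> Prop) P eps : S P -> edist z P <= eps -> Rbar_le (dist_set z S) eps.
Proof.
  intros HP Hd. apply Rbar_le_trans with (edist z P); [|exact Hd].
  apply (proj1 (Glb_Rbar_correct _)). now exists P.
Qed.

(** * Functions homogeneous of negative degree *)

Lemma continuity_pt_slice_snd (F : pt -> R) a t :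
  continuous F (a, t) -> continuity_pt (fun s => F (a, s)) t.
Proof.
  intros H. apply continuity_pt_filterlim.
  apply (continuous_comp_2 (fun _ => a) (fun s => s) (fun u v => F (u, v))).
  - apply continuous_const.
  - apply continuous_id.
  - apply (continuous_ext F); [intros []; reflexivity | exact H].
Qed.

Lemma continuity_pt_slice_fst (F : pt -> R) t a :
  continuous F (t, a) -> continuity_pt (fun s => F (s, a)) t.
Proof.
  intros H. apply continuity_pt_filterlim.
  apply (continuous_comp_2 (fun s => s) (fun _ => a) (fun u v => F (u, v))).
  - apply continuous_id.
  - apply continuous_const.
  - apply (continuous_ext F); [intros []; reflexivity | exact H].
Qed.

Lemma inv_pow_near_1 (k : nat) eps : 0 < eps ->
  exists del, 0 < del /\ forall a, Rabs (a - 1) <= del -> Rabs (/ a ^ k - 1) <= eps.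
Proof.
  intros Heps.
  assert (C : continuity_pt (fun a => / a ^ k) 1).
  { apply continuity_pt_filterlim, (ex_derive_continuous (fun a => / a ^ k)).
    auto_derive. rewrite pow1. lra. }
  destruct (proj1 (continuity_pt_locally _ _) C (mkposreal eps Heps)) as [d Hd].
  exists (d / 2). split; [apply Rdiv_lt_0_compat; [apply cond_pos | lra]|].
  intros a Ha. assert (E : / 1 ^ k = 1) by (rewrite pow1; apply Rinv_1).
  assert (0 < d) by apply cond_pos.
  left. rewrite <- E. apply Hd. change (Rabs (a - 1) < d). lra.
Qed.

Lemma quotient_near a b t del : -1 <= t <= 1 -> 0 <= del <= 1/4 ->
  Rabs (a - 1) <= del -> Rabs (b - t) <= del -> Rabs (b / a - t) <= 3 * del.
Proof.
  intros Ht Hdel Ha Hb. apply Rabs_le_between in Ha, Hb.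
  replace (b / a - t) with ((b - t + t * (1 - a)) / a) by (field; lra).
  apply Rabs_le_between. split; apply (Rmult_le_reg_r a); try lra; field_simplify; try lra; nra.
Qed.

Lemma perturbed_product_close x y c eta : 0 < eta -> 0 < y ->
  Rabs (x - y) <= eta * y / 4 -> 0 < c <= 2 -> Rabs (c - 1) <= eta / 2 ->
  Rabs (x * c - y) <= eta * y.
Proof.
  intros Heta Hy Hx Hc Hc1.
  replace (x * c - y) with ((x - y) * c + y * (c - 1)) by ring.
  eapply Rle_trans; [apply Rabs_triang|]. rewrite !Rabs_mult, (Rabs_right c), (Rabs_right y) by lra.
  assert (Rabs (x - y) * c <= eta * y / 4 * 2) by (apply Rmult_le_compat; try lra; apply Rabs_pos).
  assert (y * Rabs (c - 1) <= y * (eta / 2)) by (apply Rmult_le_compat_l; lra).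
  lra.
Qed.

Definition cont_pos_homogeneous (k : nat) (F : pt -> R) : Prop :=
  (forall p, p <> (0, 0) -> continuous F p /\ 0 < F p) /\
  (forall l p, 0 < l -> F (pscal l p) = F p / l ^ k).

Section HomogeneousRatio.

Variables (k : nat) (F : pt -> R).
Hypothesis HF : cont_pos_homogeneous k F.

Lemma homogeneous_chart eta : 0 < eta -> exists del, 0 < del /\
  forall t a b, -1 <= t <= 1 -> Rabs (a - 1) <= del -> Rabs (b - t) <= del ->
    Rabs (F (a, b) - F (1, t)) <= eta * F (1, t).
Proof.
  destruct HF as [Hreg Hhom]. intros Heta.
  assert (Hnz : forall t, (1, t) <> (0, 0)) by (intros t E; injection E; lra).
  assert (Hc : forall t, -2 <= t <= 2 -> continuity_pt (fun s => F (1, s)) t).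
  { intros t _. apply continuity_pt_slice_snd, Hreg, Hnz. }
  destruct (continuity_ab_min (fun s => F (1, s)) (-2) 2 ltac:(lra) Hc) as [tm [Hmin _]].
  assert (Hm : 0 < F (1, tm)) by apply Hreg, Hnz.
  destruct (Heine_cor2 Hc (mkposreal (eta * F (1, tm) / 4) ltac:(simpl; nra))) as [du Hdu].
  destruct (inv_pow_near_1 k (Rmin (eta / 2) 1)) as [da [Hda Hpow]]; [apply Rmin_glb_lt; lra|].
  assert (Hdu0 := cond_pos du).
  set (del := Rmin (Rmin (1/4) da) (du / 4)).
  assert (Hdel : 0 < del <= 1/4 /\ del <= da /\ del <= du / 4)
    by (unfold del, Rmin; repeat destruct Rle_dec; lra).
  exists del. split; [lra|]. intros t a b Ht Ha Hb.
  assert (Hq := quotient_near a b t del Ht ltac:(lra) Ha Hb).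
  apply Rabs_le_between in Ha, Hq.
  assert (Eab : F (a, b) = F (1, b / a) * / a ^ k).
  { unfold Rdiv in Hhom. rewrite <- Hhom by lra. unfold pscal; simpl. f_equal; f_equal; field; lra. }
  assert (Hinv : Rabs (/ a ^ k - 1) <= Rmin (eta / 2) 1) by (apply Hpow, Rabs_le_between; lra).
  rewrite Eab. apply perturbed_product_close; [lra | apply Hreg, Hnz | | |].
  - left. apply (Rlt_le_trans _ (eta * F (1, tm) / 4)); [apply Hdu; try lra; apply Rabs_def1; lra|].
    assert (F (1, tm) <= F (1, t)) by (apply Hmin; lra). nra.
  - split; [apply Rinv_0_lt_compat, pow_lt; lra|].
    assert (H1 : Rabs (/ a ^ k - 1) <= 1) by (eapply Rle_trans; [exact Hinv | apply Rmin_r]).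
    apply Rabs_le_between in H1. lra.
  - eapply Rle_trans; [exact Hinv | apply Rmin_l].
Qed.

Lemma homogeneous_ratio_sector eta D : 0 < eta -> 0 < D -> exists R1, 0 < R1 /\
  forall w v, R1 <= fst w -> in_sector w -> supn v <= D ->
    Rabs (F (padd w v) - F w) <= eta * F w.
Proof.
  intros Heta HD. destruct (homogeneous_chart eta Heta) as [del [Hdel Hchart]].
  exists (D / del). split; [apply Rdiv_lt_0_compat; lra|].
  intros [w1 w2] [v1 v2] Hw Hsec Hv. unfold in_sector in Hsec. simpl in Hw, Hsec.
  destruct (supn_ge_abs (v1, v2)) as [Hv1 Hv2]; simpl in Hv1, Hv2.
  assert (Hl : 0 < w1) by (assert (0 < D / del) by (apply Rdiv_lt_0_compat; lra); lra).
  assert (HDl : D <= w1 * del) by (apply (Rmult_le_reg_r (/ del)); [apply Rinv_0_lt_compat; lra|];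
    field_simplify; lra).
  assert (Hsmall : forall x, Rabs x <= D -> Rabs (x / w1) <= del).
  { intros x Hx. rewrite Rabs_div, (Rabs_right w1) by lra.
    apply (Rmult_le_reg_r w1); [lra|]. field_simplify; lra. }
  destruct HF as [Hreg Hhom].
  replace (padd (w1, w2) (v1, v2)) with (pscal w1 (1 + v1 / w1, w2 / w1 + v2 / w1))
    by (unfold pscal, padd; simpl; f_equal; field; lra).
  replace (w1, w2) with (pscal w1 (1, w2 / w1)) by (unfold pscal; simpl; f_equal; field; lra).
  rewrite !Hhom by lra.
  assert (Hinv : 0 < / w1 ^ k) by (apply Rinv_0_lt_compat, pow_lt; lra).
  set (Fv := F (1 + v1 / w1, w2 / w1 + v2 / w1)). set (Fw := F (1, w2 / w1)).
  replace (Fv / w1 ^ k - Fw / w1 ^ k) with ((Fv - Fw) * / w1 ^ k) by (unfold Rdiv; ring).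
  replace (eta * (Fw / w1 ^ k)) with (eta * Fw * / w1 ^ k) by (unfold Rdiv; ring).
  rewrite Rabs_mult, (Rabs_right (/ w1 ^ k)) by lra.
  apply Rmult_le_compat_r; [lra|].
  apply Hchart.
  - split; apply (Rmult_le_reg_r w1); try lra; field_simplify; try lra;
      apply Rabs_le_between in Hsec; lra.
  - replace (1 + v1 / w1 - 1) with (v1 / w1) by ring. apply Hsmall; lra.
  - replace (w2 / w1 + v2 / w1 - w2 / w1) with (v2 / w1) by ring. apply Hsmall; lra.
Qed.

End HomogeneousRatio.

Lemma cont_pos_homogeneous_rot k F :
  cont_pos_homogeneous k F -> cont_pos_homogeneous k (fun p => F (rot p)).
Proof.
  intros [Hreg Hhom]. split.
  - intros [p1 p2] Hp. split; [|apply Hreg, rot_neq0, Hp].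
    apply (continuous_comp_2 (fun p : pt => - snd p) fst (fun u v => F (u, v))).
    + apply (continuous_opp (fun p : pt => snd p)), continuous_snd.
    + apply continuous_fst.
    + apply (continuous_ext F); [intros []; reflexivity|]. apply Hreg, (rot_neq0 (p1, p2)), Hp.
  - intros l p Hl. rewrite rot_pscal. apply Hhom, Hl.
Qed.

Lemma homogeneous_ratio_uniform k F : cont_pos_homogeneous k F ->
  forall eta D, 0 < eta -> 0 < D -> exists R1, 0 < R1 /\
  forall w v, R1 <= supn w -> supn v <= D -> Rabs (F (padd w v) - F w) <= eta * F w.
Proof.
  intros HF eta D Heta HD.
  assert (HF1 := cont_pos_homogeneous_rot _ _ HF).
  assert (HF2 := cont_pos_homogeneous_rot _ _ HF1).
  assert (HF3 := cont_pos_homogeneous_rot _ _ HF2).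
  destruct (homogeneous_ratio_sector _ _ HF eta D Heta HD) as [R0 [HR0 S0]].
  destruct (homogeneous_ratio_sector _ _ HF1 eta D Heta HD) as [R1 [HR1 S1]].
  destruct (homogeneous_ratio_sector _ _ HF2 eta D Heta HD) as [R2 [HR2 S2]].
  destruct (homogeneous_ratio_sector _ _ HF3 eta D Heta HD) as [R3 [HR3 S3]].
  cbv beta in S1, S2, S3.
  set (Rm := Rmax (Rmax R0 R1) (Rmax R2 R3)).
  assert (HRm : R0 <= Rm /\ R1 <= Rm /\ R2 <= Rm /\ R3 <= Rm).
  { unfold Rm, Rmax; repeat split; repeat destruct Rle_dec; lra. }
  exists Rm. split; [lra|].
  intros w v Hw Hv.
  destruct (sector_cases w) as [Hs|[Hs|[Hs|Hs]]];
    assert (Hfst := supn_in_sector _ Hs); rewrite ?supn_rot in Hfst.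
  - apply S0; auto; lra.
  - specialize (S3 (rot w) (rot v)). rewrite <- !rot_padd, !rot4 in S3.
    apply S3; [lra | exact Hs | rewrite supn_rot; exact Hv].
  - specialize (S2 (rot (rot w)) (rot (rot v))). rewrite <- !rot_padd, !rot4 in S2.
    apply S2; [lra | exact Hs | rewrite !supn_rot; exact Hv].
  - specialize (S1 (rot (rot (rot w))) (rot (rot (rot v)))). rewrite <- !rot_padd, !rot4 in S1.
    apply S1; [lra | exact Hs | rewrite !supn_rot; exact Hv].
Qed.

(** * Norms *)

Section NormFacts.

Variable N : pt -> R.
Hypothesis HN : is_norm N.

Lemma norm_pscal c x : N (pscal c x) = Rabs c * N x.
Proof. apply HN. Qed.

Lemma norm_zero : N (0, 0) = 0.
Proof.
  replace (0, 0) with (pscal 0 (0, 0)) at 1 by (unfold pscal; simpl; f_equal; ring).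
  rewrite norm_pscal, Rabs_R0. ring.
Qed.

Lemma norm_pos x : x <> (0, 0) -> 0 < N x.
Proof.
  destruct HN as [H0 [H1 _]]. intros Hx. destruct (H0 x) as [|E]; [easy|].
  symmetry in E. now apply H1 in E.
Qed.

Lemma equidistant_cross_neq0 w d : d <> (0, 0) -> w <> (0, 0) ->
  N (padd w d) = N (psub w d) -> cross d w <> 0.
Proof.
  intros Hd Hw Heq Hcross.
  assert (Hpar : cross w d = 0) by (unfold cross in *; lra).
  apply (parallel_scal w d Hd) in Hpar.
  set (l := (fst w * fst d + snd w * snd d) / sqn d) in Hpar.
  assert (E1 : padd w d = pscal (l + 1) d) by (rewrite Hpar; unfold padd, pscal; simpl; f_equal; ring).
  assert (E2 : psub w d = pscal (l - 1) d) by (rewrite Hpar; unfold psub, pscal; simpl; f_equal; ring).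
  rewrite E1, E2, !norm_pscal in Heq.
  assert (Hd0 := norm_pos d Hd).
  assert (Habs : Rabs (l + 1) = Rabs (l - 1)) by (apply (Rmult_eq_reg_r (N d)); lra).
  assert (Hl : l = 0) by (revert Habs; unfold Rabs; repeat destruct Rcase_abs; lra).
  apply Hw. rewrite Hpar, Hl. unfold pscal; simpl; f_equal; ring.
Qed.

Lemma norm_ge_supn : (forall p, p <> (0, 0) -> continuous N p) ->
  exists m, 0 < m /\ forall x, m * supn x <= N x.
Proof.
  intros Hc.
  destruct (continuity_ab_min (fun t => N (1, t)) (-1) 1) as [t1 [Hmin1 _]]; [lra| |].
  { intros t _. apply continuity_pt_slice_snd, Hc. intros E; injection E; lra. }
  destruct (continuity_ab_min (fun t => N (t, 1)) (-1) 1) as [t2 [Hmin2 _]]; [lra| |].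
  { intros t _. apply continuity_pt_slice_fst, Hc. intros E; injection E; lra. }
  assert (Hm1 : 0 < N (1, t1)) by (apply norm_pos; intros E; injection E; lra).
  assert (Hm2 : 0 < N (t2, 1)) by (apply norm_pos; intros E; injection E; lra).
  exists (Rmin (N (1, t1)) (N (t2, 1))). split; [apply Rmin_glb_lt; lra|].
  assert (Hmin := Rmin_l (N (1, t1)) (N (t2, 1))). assert (Hmin' := Rmin_r (N (1, t1)) (N (t2, 1))).
  intros [x1 x2]. unfold supn, Rmax; simpl.
  assert (Hx1 := Rabs_pos x1). assert (Hx2 := Rabs_pos x2).
  destruct Rle_dec as [Hle|Hlt]; [destruct (Req_dec x2 0) as [->|Hx2']|].
  - rewrite Rabs_R0, Rmult_0_r. apply (proj1 HN).
  - replace (x1, x2) with (pscal x2 (x1 / x2, 1)) by (unfold pscal; simpl; f_equal; field; auto).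
    rewrite norm_pscal. assert (N (t2, 1) <= N (x1 / x2, 1)) by (apply Hmin2, abs_div_le_1; auto).
    nra.
  - assert (Hx1' : x1 <> 0) by (intros ->; rewrite Rabs_R0 in Hlt; lra).
    replace (x1, x2) with (pscal x1 (1, x2 / x1)) by (unfold pscal; simpl; f_equal; field; auto).
    rewrite norm_pscal. assert (N (1, t1) <= N (1, x2 / x1)) by (apply Hmin1, abs_div_le_1; auto; lra).
    nra.
Qed.

Lemma Mab_equidistant a b z : Mab N a b z ->
  N (padd (psub z (pscal (/ 2) (padd a b))) (pscal (/ 2) (psub b a)))
  = N (psub (psub z (pscal (/ 2) (padd a b))) (pscal (/ 2) (psub b a))).
Proof.
  intros HM. unfold Mab in HM.
  replace (padd (psub z (pscal (/ 2) (padd a b))) (pscal (/ 2) (psub b a)))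
    with (pscal (-1) (psub a z)) by (unfold padd, psub, pscal; simpl; f_equal; field).
  replace (psub (psub z (pscal (/ 2) (padd a b))) (pscal (/ 2) (psub b a)))
    with (pscal (-1) (psub b z)) by (unfold padd, psub, pscal; simpl; f_equal; field).
  rewrite !norm_pscal, HM. reflexivity.
Qed.

End NormFacts.

(** * The Hessian of a C^2 strictly convex norm *)

Lemma quadratic_nonneg_linear_coeff a b : (forall t, 0 <= a * t ^ 2 + b * t) -> b = 0.
Proof.
  intros H. set (k := Rabs a + 1).
  assert (Hk : 0 < k) by (unfold k; assert (0 <= Rabs a) by apply Rabs_pos; lra).
  assert (Hak : a <= k) by (unfold k; assert (a <= Rabs a) by apply RRle_abs; lra).
  specialize (H (- b / (2 * k))).
  assert (a * (- b / (2 * k)) ^ 2 <= k * (- b / (2 * k)) ^ 2) by (apply Rmult_le_compat_r; nra).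
  assert (E : k * (- b / (2 * k)) ^ 2 + b * (- b / (2 * k)) = - (b ^ 2 / (4 * k))) by (field; lra).
  assert (0 <= b ^ 2 / (4 * k)) by (apply Rdiv_le_0_compat; nra).
  assert (b ^ 2 / (4 * k) * (4 * k) = b ^ 2) by (field; lra).
  nra.
Qed.

(* A positive semidefinite form vanishing at p has p in its kernel, so it is a multiple of
   (h1 p2 - h2 p1)^2. *)
Lemma psd_form_kernel A B C p1 p2 :
  (forall h1 h2, 0 <= h1 * h1 * A + h1 * h2 * B + h2 * h2 * C) ->
  p1 * p1 * A + p1 * p2 * B + p2 * p2 * C = 0 ->
  forall h1 h2, (h1 * h1 * A + h1 * h2 * B + h2 * h2 * C) * (p1 ^ 2 + p2 ^ 2) ^ 2 =
    (h1 * p2 - h2 * p1) ^ 2 * (- p2 * - p2 * A + - p2 * p1 * B + p1 * p1 * C).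
Proof.
  intros Hq Hp h1 h2.
  assert (L1 : 2 * A * p1 + B * p2 = 0).
  { apply (quadratic_nonneg_linear_coeff A). intros t. specialize (Hq (p1 + t) p2). nra. }
  assert (L2 : B * p1 + 2 * C * p2 = 0).
  { apply (quadratic_nonneg_linear_coeff C). intros t. specialize (Hq p1 (p2 + t)). nra. }
  (* Expand q(|p|^2 h) using |p|^2 h = (h . p) p + (h . rot p) rot p; the cross terms
     only involve the gradient of q at p. *)
  transitivity ((h1 * p2 - h2 * p1) ^ 2 * (- p2 * - p2 * A + - p2 * p1 * B + p1 * p1 * C)
    + (h1 * p1 + h2 * p2) ^ 2 * (p1 * (2 * A * p1 + B * p2) + p2 * (B * p1 + 2 * C * p2)) / 2
    + (h1 * p1 + h2 * p2) * (h2 * p1 - h1 * p2)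
      * (- p2 * (2 * A * p1 + B * p2) + p1 * (B * p1 + 2 * C * p2))); [field|].
  rewrite L1, L2. field.
Qed.

Lemma D1_homogeneous (g : pt -> R) l c x : l <> 0 ->
  (forall p, g (pscal l p) = c * g p) -> ex_derive (fun t => g (t, snd x)) (fst x) ->
  D1 g (pscal l x) = c / l * D1 g x.
Proof.
  intros Hl Hg Hex. unfold D1. destruct x as [x1 x2]. simpl in *.
  apply is_derive_unique.
  apply is_derive_ext with (fun t => c * g (t / l, x2)).
  { intros t. rewrite <- Hg. unfold pscal; simpl. f_equal; f_equal; field; auto. }
  replace (c / l * Derive (fun t => g (t, x2)) x1)
    with (c * (/ l * Derive (fun t => g (t, x2)) x1)) by (field; auto).
  apply is_derive_scal, (is_derive_comp (fun u => g (u, x2)) (fun t => t / l)).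
  - replace (l * x1 / l) with x1 by (field; auto). now apply Derive_correct.
  - auto_derive; auto. field; auto.
Qed.

Lemma D2_homogeneous (g : pt -> R) l c x : l <> 0 ->
  (forall p, g (pscal l p) = c * g p) -> ex_derive (fun t => g (fst x, t)) (snd x) ->
  D2 g (pscal l x) = c / l * D2 g x.
Proof.
  intros Hl Hg Hex. unfold D2. destruct x as [x1 x2]. simpl in *.
  apply is_derive_unique.
  apply is_derive_ext with (fun t => c * g (x1, t / l)).
  { intros t. rewrite <- Hg. unfold pscal; simpl. f_equal; f_equal; field; auto. }
  replace (c / l * Derive (fun t => g (x1, t)) x2)
    with (c * (/ l * Derive (fun t => g (x1, t)) x2)) by (field; auto).
  apply is_derive_scal, (is_derive_comp (fun u => g (x1, u)) (fun t => t / l)).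
  - replace (l * x2 / l) with x2 by (field; auto). now apply Derive_correct.
  - auto_derive; auto. field; auto.
Qed.

Lemma hess_quad_scal_dir f p c h : hess_quad f p (pscal c h) = c ^ 2 * hess_quad f p h.
Proof. unfold hess_quad, pscal; simpl; ring. Qed.

Lemma continuous_Rplus (f g : pt -> R) p :
  continuous f p -> continuous g p -> continuous (fun q => f q + g q) p.
Proof. apply (continuous_plus f g). Qed.

Lemma continuous_Rmult (f g : pt -> R) p :
  continuous f p -> continuous g p -> continuous (fun q => f q * g q) p.
Proof. apply (continuous_mult f g). Qed.

Lemma continuous_Ropp (f : pt -> R) p : continuous f p -> continuous (fun q => - f q) p.
Proof. apply (continuous_opp f). Qed.

Lemma continuous_Rinv_pt (f : pt -> R) p :
  continuous f p -> f p <> 0 -> continuous (fun q => / f q) p.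
Proof. intros Hf H0. apply (continuous_comp f Rinv); [exact Hf | now apply continuous_Rinv]. Qed.

Definition hess_coef (N : pt -> R) (p : pt) : R := hess_quad N p (rot p) / sqn p ^ 2.

Section C2StrictlyConvexNorm.

Variable N : pt -> R.
Hypothesis HN : C2_strictly_convex_norm N.

Let N_norm : is_norm N := proj1 HN.

Lemma C2_ex_derive g p : p <> (0, 0) -> List.In g (N :: D1 N :: D2 N :: nil) ->
  ex_derive (fun t => g (t, snd p)) (fst p) /\ ex_derive (fun t => g (fst p, t)) (snd p).
Proof. intros Hp Hg. exact (proj1 (proj1 (proj2 HN) p Hp) g Hg). Qed.

Lemma C2_continuous g p : p <> (0, 0) ->
  List.In g (N :: D1 N :: D2 N :: D1 (D1 N) :: D2 (D1 N) :: D1 (D2 N) :: D2 (D2 N) :: nil) ->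
  continuous g p.
Proof. intros Hp Hg. exact (proj2 (proj1 (proj2 HN) p Hp) g Hg). Qed.

Lemma locally_neq0 p : p <> (0, 0) -> locally p (fun u => u <> (0, 0)).
Proof.
  intros Hp.
  assert (H : locally p (fun u => 0 < N u)).
  { apply (C2_continuous N p Hp ltac:(simpl; auto) (fun r => 0 < r)).
    apply open_gt, (norm_pos N N_norm p Hp). }
  revert H. apply filter_imp. intros u Hu ->.
  rewrite (norm_zero N N_norm) in Hu. lra.
Qed.

Lemma grad_pscal l p : 0 < l -> D1 N (pscal l p) = D1 N p /\ D2 N (pscal l p) = D2 N p.
Proof.
  intros Hl. destruct (pt_zero_or_neq0 p) as [->|Hp].
  { replace (pscal l (0, 0)) with (0, 0) by (unfold pscal; simpl; f_equal; ring). easy. }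
  assert (Hhom : forall q, N (pscal l q) = l * N q).
  { intros q. rewrite (norm_pscal N N_norm), Rabs_right by lra. reflexivity. }
  destruct (C2_ex_derive N p Hp ltac:(simpl; auto)) as [Hx Hy].
  rewrite (D1_homogeneous N l l p), (D2_homogeneous N l l p) by (auto; lra).
  split; field; lra.
Qed.

Lemma hess_quad_pscal l p h : 0 < l -> p <> (0, 0) ->
  hess_quad N (pscal l p) h = / l * hess_quad N p h.
Proof.
  intros Hl Hp.
  assert (G1 : forall q, D1 N (pscal l q) = 1 * D1 N q) by (intros q; rewrite (proj1 (grad_pscal l q Hl)); ring).
  assert (G2 : forall q, D2 N (pscal l q) = 1 * D2 N q) by (intros q; rewrite (proj2 (grad_pscal l q Hl)); ring).
  destruct (C2_ex_derive (D1 N) p Hp ltac:(simpl; auto)) as [X1 Y1].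
  destruct (C2_ex_derive (D2 N) p Hp ltac:(simpl; auto)) as [X2 Y2].
  unfold hess_quad.
  rewrite (D1_homogeneous (D1 N) l 1 p), (D2_homogeneous (D1 N) l 1 p),
    (D1_homogeneous (D2 N) l 1 p), (D2_homogeneous (D2 N) l 1 p) by (auto; lra).
  field. lra.
Qed.

Lemma C2_differentiable g p : p <> (0, 0) -> List.In g (N :: D1 N :: D2 N :: nil) ->
  differentiable_pt_lim (fun u v => g (u, v)) (fst p) (snd p) (D1 g p) (D2 g p).
Proof.
  intros Hp Hg.
  assert (Hg2 : List.In (D1 g) (N :: D1 N :: D2 N :: D1 (D1 N) :: D2 (D1 N) :: D1 (D2 N) :: D2 (D2 N) :: nil)).
  { destruct Hg as [<-|[<-|[<-|[]]]]; simpl; auto 10. }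
  destruct p as [x y]. apply filterdiff_differentiable_pt_lim.
  apply (is_derive_filterdiff (fun u v => g (u, v)) x y (fun u v => D1 g (u, v))).
  - apply (filter_imp (fun u => u <> (0, 0))); [|exact (locally_neq0 _ Hp)].
    intros [u v] Huv. apply Derive_correct, (C2_ex_derive g (u, v) Huv Hg).
  - apply Derive_correct, (C2_ex_derive g (x, y) Hp Hg).
  - apply (continuous_ext (D1 g)); [intros []; reflexivity|]. now apply C2_continuous.
Qed.

Lemma is_derive_along_line g w d s : padd w (pscal s d) <> (0, 0) ->
  List.In g (N :: D1 N :: D2 N :: nil) ->
  is_derive (fun s => g (padd w (pscal s d))) s
    (D1 g (padd w (pscal s d)) * fst d + D2 g (padd w (pscal s d)) * snd d).
Proof.
  intros Hq Hg. apply is_derive_Reals.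
  apply (derivable_pt_lim_comp_2d (fun u v => g (u, v)) (fun s => fst w + s * fst d)
    (fun s => snd w + s * snd d)).
  - exact (C2_differentiable g _ Hq Hg).
  - apply is_derive_Reals. auto_derive; auto; ring.
  - apply is_derive_Reals. auto_derive; auto; ring.
Qed.

Definition slope_along (w d : pt) (s : R) : R :=
  D1 N (padd w (pscal s d)) * fst d + D2 N (padd w (pscal s d)) * snd d.

Lemma is_derive_norm_line w d s : padd w (pscal s d) <> (0, 0) ->
  is_derive (fun s => N (padd w (pscal s d))) s (slope_along w d s).
Proof. intros Hq. apply is_derive_along_line; simpl; auto. Qed.

Lemma is_derive_slope_along w d s : padd w (pscal s d) <> (0, 0) ->
  is_derive (slope_along w d) s (hess_quad N (padd w (pscal s d)) d).
Proof.
  intros Hq.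
  assert (A := is_derive_along_line (D1 N) w d s Hq ltac:(simpl; auto)).
  assert (B := is_derive_along_line (D2 N) w d s Hq ltac:(simpl; auto)).
  assert (C := is_derive_plus _ _ s _ _ (is_derive_scal_l _ s _ (fst d) A)
                 (is_derive_scal_l _ s _ (snd d) B)).
  match type of C with is_derive _ _ ?v =>
    replace (hess_quad N (padd w (pscal s d)) d) with v by (unfold hess_quad, plus, scal; simpl; unfold mult; simpl; ring) end.
  exact C.
Qed.

Lemma hess_quad_self p : p <> (0, 0) -> hess_quad N p p = 0.
Proof.
  intros Hp.
  assert (Hline : forall s, -1 < s -> padd p (pscal s p) = pscal (1 + s) p).
  { intros s _. destruct p; unfold padd, pscal; simpl; f_equal; ring. }
  assert (Hp0 : padd p (pscal 0 p) = p) by (rewrite Hline by lra; destruct p; unfold pscal; simpl; f_equal; ring).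
  assert (H := is_derive_slope_along p p 0 ltac:(now rewrite Hp0)). rewrite Hp0 in H.
  assert (Hconst : is_derive (slope_along p p) 0 0).
  { apply is_derive_ext_loc with (fun _ => slope_along p p 0).
    - apply (locally_interval _ 0 (-1) p_infty); simpl; try lra; auto.
      intros s Hs _. unfold slope_along. rewrite !Hline by lra.
      destruct (grad_pscal (1 + s) p ltac:(lra)) as [-> ->].
      destruct (grad_pscal (1 + 0) p ltac:(lra)) as [-> ->]. reflexivity.
    - auto_derive; auto. }
  apply is_derive_unique in H, Hconst. congruence.
Qed.

Lemma hess_quad_nonneg p h : p <> (0, 0) -> 0 <= hess_quad N p h.
Proof.
  intros Hp. destruct (Req_dec (cross h p) 0) as [Hc|Hc].
  - rewrite (parallel_scal h p Hp Hc), hess_quad_scal_dir, hess_quad_self by exact Hp. lra.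
  - left. apply (proj2 (proj2 HN)); [exact Hp | exact Hc].
Qed.

Lemma hess_quad_factor p h : p <> (0, 0) -> hess_quad N p h = cross h p ^ 2 * hess_coef N p.
Proof.
  intros Hp. assert (HS := sqn_pos p Hp).
  destruct p as [p1 p2], h as [h1 h2].
  assert (E := psd_form_kernel _ _ _ p1 p2
    (fun h1 h2 => hess_quad_nonneg (p1, p2) (h1, h2) Hp) (hess_quad_self (p1, p2) Hp) h1 h2).
  unfold hess_coef, hess_quad, cross, rot, sqn in *; cbn [fst snd] in *.
  apply (Rmult_eq_reg_r ((p1 ^ 2 + p2 ^ 2) ^ 2)); [|apply pow_nonzero; lra].
  rewrite E. field. lra.
Qed.

Lemma hess_coef_cont_pos_homogeneous : cont_pos_homogeneous 3 (hess_coef N).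
Proof.
  split.
  - intros [x y] Hp. assert (HS := sqn_pos (x, y) Hp). split.
    + assert (Cx := continuous_fst x y). assert (Cy := continuous_snd x y).
      assert (C : forall g, List.In g (D1 (D1 N) :: D2 (D1 N) :: D1 (D2 N) :: D2 (D2 N) :: nil) ->
        continuous g (x, y)) by (intros g Hg; apply C2_continuous; [exact Hp | simpl in *; tauto]).
      unfold hess_coef, Rdiv. apply continuous_Rmult.
      * unfold hess_quad, rot.
        repeat first [ apply continuous_Rplus | apply continuous_Rmult | apply continuous_Ropp
                     | exact Cx | exact Cy | apply C; simpl; tauto ].
      * apply continuous_Rinv_pt; [|apply pow_nonzero; lra].
        unfold sqn; simpl.
        repeat first [ apply continuous_Rplus | apply continuous_Rmult | apply continuous_const
                     | exact Cx | exact Cy ].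
    + unfold hess_coef. apply Rdiv_lt_0_compat; [|apply pow_lt; exact HS].
      apply (proj2 (proj2 HN)); [exact Hp|]. unfold parallel, rot; simpl. unfold sqn in HS; simpl in HS. nra.
  - intros l p Hl. destruct (pt_zero_or_neq0 p) as [->|Hp].
    + replace (pscal l (0, 0)) with (0, 0) by (unfold pscal; simpl; f_equal; ring).
      assert (Z : hess_quad N (0, 0) (rot (0, 0)) = 0) by (unfold hess_quad, rot; simpl; ring).
      unfold hess_coef. rewrite Z. unfold Rdiv. ring.
    + unfold hess_coef. rewrite rot_pscal, hess_quad_scal_dir, hess_quad_pscal by auto.
      assert (HS := sqn_pos p Hp).
      replace (sqn (pscal l p)) with (l ^ 2 * sqn p) by (unfold sqn, pscal; simpl; ring).
      field. split; lra.
Qed.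

End C2StrictlyConvexNorm.

(** * The bisector far from a *)

Lemma ratio_sandwich G0 Gs Gc eta : 0 < G0 -> 0 <= eta <= 1 ->
  Rabs (Gs - G0) <= eta / 3 * G0 -> Rabs (Gc - G0) <= eta / 3 * G0 ->
  Gc * (1 - eta) <= Gs <= Gc * (1 + eta).
Proof. intros HG0 Heta Hs Hc. apply Rabs_le_between in Hs, Hc. split; nra. Qed.

Section Bisector.

Variable N : pt -> R.
Hypothesis HN : C2_strictly_convex_norm N.

Lemma equidistant_critical_point w d :
  (forall s, -1 <= s <= 1 -> padd w (pscal s d) <> (0, 0)) ->
  N (padd w d) = N (psub w d) -> exists s0, -1 <= s0 <= 1 /\ slope_along N w d s0 = 0.
Proof.
  intros Hnz Heq.
  apply (rolle_is_derive (fun s => N (padd w (pscal s d))));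
    [lra | intros s Hs; apply (is_derive_norm_line N HN), Hnz, Hs|].
  rewrite segment_end_plus, segment_end_minus. symmetry. exact Heq.
Qed.

Lemma equidistant_critical_near_center eta D : 0 < eta <= 1 -> 0 < D ->
  exists W, 0 < W /\ forall w d, W <= supn w -> supn d <= D -> d <> (0, 0) ->
    N (padd w d) = N (psub w d) ->
    exists s0, Rabs s0 <= eta /\ padd w (pscal s0 d) <> (0, 0) /\ slope_along N w d s0 = 0.
Proof.
  intros Heta HD. assert (HG := hess_coef_cont_pos_homogeneous N HN).
  destruct (homogeneous_ratio_uniform _ _ HG (eta / 3) D) as [R1 [HR1 Hunif]]; [lra | lra |].
  exists (R1 + D). split; [lra|]. intros w d Hw Hd Hd0 Heq.
  assert (Hsd : forall s, -1 <= s <= 1 -> supn (pscal s d) <= D)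
    by (intros s Hs; eapply Rle_trans; [apply supn_pscal_le, Hs | exact Hd]).
  assert (Hnz : forall s, -1 <= s <= 1 -> padd w (pscal s d) <> (0, 0)).
  { intros s Hs. apply supn_pos_neq0.
    assert (H := supn_padd_ge w (pscal s d)). assert (H' := Hsd s Hs). lra. }
  assert (Hw0 : w <> (0, 0)) by (apply supn_pos_neq0; lra).
  destruct (equidistant_critical_point w d Hnz Heq) as [s0 [Hs0 Hcrit]].
  exists s0. split; [|split; [apply Hnz, Hs0 | exact Hcrit]].
  set (cr := cross d w).
  assert (Hcr : 0 < cr ^ 2) by (apply pow2_gt_0, (equidistant_cross_neq0 N (proj1 HN)); auto).
  (* Along the segment the cross product with d is constant, so only hess_coef varies. *)
  assert (Hhess : forall s, -1 <= s <= 1 ->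
    hess_quad N (padd w (pscal s d)) d = cr ^ 2 * hess_coef N (padd w (pscal s d))).
  { intros s Hs. rewrite (hess_quad_factor N HN) by auto. f_equal. unfold cr, cross, padd, pscal; simpl; ring. }
  assert (HG0 : 0 < hess_coef N w) by apply (proj1 HG), Hw0.
  assert (HGs : forall s, -1 <= s <= 1 ->
    Rabs (hess_coef N (padd w (pscal s d)) - hess_coef N w) <= eta / 3 * hess_coef N w)
    by (intros s Hs; apply Hunif; [lra | apply Hsd, Hs]).
  apply (critical_point_near_center (fun s => N (padd w (pscal s d))) (slope_along N w d)
    (fun s => hess_quad N (padd w (pscal s d)) d) s0
    (cr ^ 2 * hess_coef N (padd w (pscal s0 d))) eta); auto; try lra.
  - intros s Hs. apply (is_derive_norm_line N HN), Hnz, Hs.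
  - intros s Hs. apply (is_derive_slope_along N HN), Hnz, Hs.
  - intros s Hs. rewrite Hhess by exact Hs.
    destruct (ratio_sandwich _ _ _ eta HG0 ltac:(lra) (HGs s Hs) (HGs s0 Hs0)). split; nra.
  - apply Rmult_lt_0_compat; [exact Hcr | apply (proj1 HG), Hnz, Hs0].
  - rewrite segment_end_plus, segment_end_minus. exact Heq.
Qed.

Lemma Lab_of_critical a b q : N (psub b a) = 1 -> q <> (0, 0) ->
  D1 N q * fst (psub b a) + D2 N q * snd (psub b a) = 0 ->
  Lab N a b (padd (pscal (/ 2) (padd a b)) q).
Proof.
  intros Hn Hq Hcrit. assert (Hq0 := norm_pos N (proj1 HN) q Hq).
  exists (pscal (/ N q) q), (N q). split.
  - rewrite Hn, Rinv_1. split.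
    + rewrite (norm_pscal N (proj1 HN)), Rabs_right by (left; apply Rinv_0_lt_compat, Hq0).
      apply Rinv_l, Rgt_not_eq, Hq0.
    + destruct (grad_pscal N HN (/ N q) q) as [-> ->]; [apply Rinv_0_lt_compat, Hq0|].
      unfold pscal; simpl. rewrite !Rmult_1_l. exact Hcrit.
  - destruct q; unfold psub, padd, pscal; simpl. f_equal; field; lra.
Qed.

Lemma bisector_near_Lab eta D : 0 < eta <= 1 -> 0 < D ->
  exists W, 0 < W /\ forall a b z, a <> b -> N (psub b a) = 1 ->
    supn (pscal (/ 2) (psub b a)) <= D -> Mab N a b z ->
    W <= supn (psub z (pscal (/ 2) (padd a b))) ->
    exists P, Lab N a b P /\ edist z P <= 2 * eta * D.
Proof.
  intros Heta HD.
  destruct (equidistant_critical_near_center eta D Heta HD) as [W [HW Hcrit]].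
  exists W. split; [exact HW|]. intros a b z Hab Hn Hd HM Hw.
  set (d := pscal (/ 2) (psub b a)) in *. set (w := psub z (pscal (/ 2) (padd a b))) in *.
  assert (Hd0 : d <> (0, 0)).
  { unfold d, pscal, psub; intros E; injection E; intros E2 E1.
    apply Hab. destruct a, b; simpl in *; f_equal; lra. }
  destruct (Hcrit w d Hw Hd Hd0 (Mab_equidistant N (proj1 HN) a b z HM)) as [s0 [Hs0 [Hq Hslope]]].
  exists (padd z (pscal s0 d)). split.
  - replace (padd z (pscal s0 d)) with (padd (pscal (/ 2) (padd a b)) (padd w (pscal s0 d)))
      by (unfold w, padd, psub, pscal; simpl; f_equal; ring).
    apply Lab_of_critical; [exact Hn | exact Hq|].
    transitivity (2 * slope_along N w d s0); [|rewrite Hslope; ring].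
    unfold slope_along. set (q := padd w (pscal s0 d)). unfold d, psub, pscal; cbn [fst snd]. field.
  - eapply Rle_trans; [apply edist_padd_pscal|].
    assert (0 <= Rabs s0) by apply Rabs_pos. nra.
Qed.

End Bisector.

Theorem proposition2p1 (N : pt -> R) :
  C2_strictly_convex_norm N ->
  forall eps : R, eps > 0 ->
  exists R0 : R, R0 > 0 /\
    forall a b : pt, a <> b -> N (psub b a) = 1 ->
      forall z : pt, Mab N a b z -> ~ eball a R0 z ->
        Rbar_le (dist_set z (Lab N a b)) eps.
Proof.
  intros HN eps Heps.
  destruct (norm_ge_supn N (proj1 HN) (fun p Hp => C2_continuous N HN N p Hp ltac:(simpl; auto)))
    as [m [Hm Hlow]].
  set (D := / (2 * m)). assert (HD : 0 < D) by (apply Rinv_0_lt_compat; lra).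
  set (eta := Rmin 1 (eps / (2 * D))).
  assert (Heta : 0 < eta <= 1).
  { split; [apply Rmin_glb_lt; [lra | apply Rdiv_lt_0_compat; lra] | apply Rmin_l]. }
  assert (Heta_eps : 2 * eta * D <= eps).
  { apply (Rmult_le_reg_r (/ (2 * D))); [apply Rinv_0_lt_compat; lra|].
    replace (2 * eta * D * / (2 * D)) with eta by (field; lra). apply Rmin_r. }
  destruct (bisector_near_Lab N HN eta D Heta HD) as [W [HW Hnear]].
  exists (2 * (W + D)). split; [lra|].
  intros a b Hab Hn z HM Hball.
  assert (Hd : supn (pscal (/ 2) (psub b a)) <= D).
  { unfold D. rewrite supn_pscal, Rabs_right, Rinv_mult by lra.
    assert (H := Hlow (psub b a)). rewrite Hn in H.
    apply Rmult_le_compat_l; [lra|]. apply (Rmult_le_reg_l m); [lra|]. field_simplify; lra. }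
  assert (Hw := midpoint_far_from_ball a b z _ Hball).
  destruct (Hnear a b z Hab Hn Hd HM ltac:(lra)) as [P [HP Hdist]].
  apply (dist_set_le z (Lab N a b) P); [exact HP | lra].
Qed.
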